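(* Let $p_1,p_2\ge 0$ with $p_1+p_2\le 1$. For every $n\ge 1$, the expected value of the subtree number index of the random polyphenylene chain $RPC(n,p_1,p_2)$ is \[ E(\mathrm{STN}(RPC(n,p_1,p_2)))=\frac{441}{(11+4p_1+p_2)^2}(12+4p_1+p_2)^n+\frac{144p_1+36p_2-45}{11+4p_1+p_2}\,n-\frac{441}{(11+4p_1+p_2)^2}. \]
   Context: For a graph $G$, $\mathrm{STN}(G)$ is the number of nonempty subtrees of $G$ (subgraphs that are trees, single vertices included). A polyphenylene chain with $n$ hexagons consists of hexagons (6-cycles) $H_1,\dots,H_n$, pairwise vertex-disjoint, where for each $i=1,\dots,n-1$ one vertex of $H_i$ is joined to one vertex of $H_{i+1}$ by a single edge (a cut edge), and there are no other edges. For $2\le i\le n-1$, the hexagon $H_i$ has two distinct vertices incident to cut edges (toward $H_{i-1}$ and $H_{i+1}$); their distance in $H_i$ is $1$ (ortho), $2$ (meta) or $3$ (para). The random polyphenylene chain $RPC(n,p_1,p_2)$ is built by stepwise addition of terminal hexagons: for $n\le 2$ the chain is unique, and at each step $i=3,\dots,n$, the new hexagon $H_i$ is attached by a cut edge to a vertex of $H_{i-1}$ that is at distance $1$ (ortho) from the vertex of $H_{i-1}$ attached to $H_{i-2}$ with probability $p_1$, at distance $2$ (meta) with probability $p_2$, and at distance $3$ (para) with probability $1-p_1-p_2$, independently at each step. *)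

From mathcomp Require Import all_boot all_order all_algebra.
From mathcomp Require Import boolp.
Set Implicit Arguments. Unset Strict Implicit. Unset Printing Implicit Defensive.
Import Order.TTheory GRing.Theory Num.Theory.

(* A simple graph is given by a symmetric irreflexive relation [g] on a finType.
   A subgraph is a pair (S, F) of a vertex set S and a set F of edges of g
   (edges as 2-element vertex sets {u,v}) with both endpoints in S. *)

Definition edge_rel (T : finType) (F : {set {set T}}) : rel T :=
  fun x y => [set x; y] \in F.

Definition is_subtree (T : finType) (g : rel T) (S : {set T}) (F : {set {set T}}) : Prop :=
  [/\ S != set0,
      (forall e, e \in F ->
         exists u v, [/\ u \in S, v \in S, g u v & e = [set u; v]]),
      (forall u v, u \in S -> v \in S -> connect (edge_rel F) u v)
    & ~ (exists s : seq T, [/\ uniq s, (2 < size s)%N & cycle (edge_rel F) s])].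

Definition STN (T : finType) (g : rel T) : nat :=
  #|[set x : {set T} * {set {set T}} | `[< is_subtree g x.1 x.2 >]]|.

(* Vertices: (i, k) = vertex k (k = 0..5, in cyclic order) of hexagon H_{i+1}. *)
Definition hex_adj (a b : 'I_6) : bool :=
  (a.+1 %% 6 == b :> nat) || (b.+1 %% 6 == a :> nat).

(* Attachment types: t is a sequence over 'I_3, 0 = ortho, 1 = meta, 2 = para;
   the j-th entry (0-based) is the type chosen at step j+3, i.e. the distance
   in hexagon H_{j+2} between its two cut-edge vertices is j-th entry + 1.
   Convention: each hexagon H_{i+1} with i >= 1 receives the cut edge from its
   predecessor at its vertex 0; the outgoing cut edge of H_1 leaves from vertex
   0, and that of H_{h+1} (h >= 1) leaves from vertex (t_{h-1} + 1), which is
   at distance t_{h-1}+1 from vertex 0. *)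
Definition out_pos (t : seq 'I_3) (h : nat) : nat :=
  if h == 0%N then 0%N else (nth ord0 t h.-1).+1.

Definition pc_adj (n : nat) (t : seq 'I_3) : rel ('I_n * 'I_6) :=
  fun u v =>
    [|| (u.1 == v.1) && hex_adj u.2 v.2,
        [&& (v.1 == u.1.+1 :> nat), (u.2 == out_pos t u.1 :> nat) & (v.2 == 0%N :> nat)]
      | [&& (u.1 == v.1.+1 :> nat), (v.2 == out_pos t v.1 :> nat) & (u.2 == 0%N :> nat)]].

Local Open Scope ring_scope.

Definition step_prob (R : pzRingType) (p1 p2 : R) (k : 'I_3) : R :=
  if (k == 0 :> nat) then p1 else if (k == 1 :> nat) then p2 else 1 - p1 - p2.

Definition E_STN_RPC (R : pzRingType) (p1 p2 : R) (n : nat) : R :=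
  \sum_(t : (n - 2).-tuple 'I_3)
     (\prod_(k <- t) step_prob p1 p2 k) * (STN (@pc_adj n t))%:R.

From mathcomp Require Import all_boot all_order all_algebra.
Import Order.TTheory GRing.Theory Num.Theory.
From mathcomp Require Import boolp zify ring lra.
Set Implicit Arguments. Unset Strict Implicit. Unset Printing Implicit Defensive.

(* Let the cut edge [a0 b0] split a chain into its first hexagon [A] and the rest [B].
   A subtree either lies in [A], or lies in [B], or is a subtree of [A] through [a0] glued
   along the cut edge to a subtree of [B] through [b0]. Writing [S(X)] for the number of
   subtrees of [X] and [S_v(X)] for those containing [v],
     S(A u B) = S(A) + S(B) + S_a0(A) S_b0(B),   S_v(A u B) = S_v(A) + S_v,a0(A) S_b0(B).
   The subtrees of a hexagon are its 36 arcs (a first vertex and a length 0..5); 21 of them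
   contain a given vertex, and 16, 13, 12 contain two vertices at distance 1, 2, 3. This gives
   linear recurrences for the counts along the chain; averaging over the independent
   attachment types gives linear recurrences for the expectations, solved by the closed form. *)

Section FinGraphs.
Variable T : finType.

Lemma edge_rel_sym (F : {set {set T}}) : symmetric (edge_rel F).
Proof. by move=> x y; rewrite /edge_rel setUC. Qed.

Lemma connect_edge_relS (F F' : {set {set T}}) : F \subset F' ->
  subrel (connect (edge_rel F)) (connect (edge_rel F')).
Proof.
move=> sFF' x y; apply: connect_sub => u v uv; apply: connect1.
by rewrite /edge_rel (subsetP sFF').
Qed.

Lemma set2_eq_cases (x y u v : T) : [set x; y] = [set u; v] ->
  (x = u /\ y = v) \/ (x = v /\ y = u).
Proof.
move=> E.
have /set2P xuv : x \in [set u; v] by rewrite -E set21.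
have /set2P yuv : y \in [set u; v] by rewrite -E set22.
have /set2P uxy : u \in [set x; y] by rewrite E set21.
have /set2P vxy : v \in [set x; y] by rewrite E set22.
by case: xuv yuv uxy vxy => -> [] -> [] ? [] ?; subst; auto.
Qed.

Lemma next_next_neq (s : seq T) x : uniq s -> 2 < size s -> x \in s ->
  next s (next s x) != x.
Proof.
move=> us ss xs; case: (rot_to xs) => i s' def.
rewrite -!(next_rot i us) def.
have : uniq (x :: s') by rewrite -def rot_uniq.
have : 2 < size (x :: s') by rewrite -def size_rot.
case: s' {def} => [|y [|z r]] //= _ /andP[xn /andP[yn _]].
have xy : (x == y) = false by apply: contraNF xn => /eqP->; rewrite mem_head.
have zx : (z == x) = false by apply: contraNF xn => /eqP->; rewrite !inE eqxx orbT.
by rewrite eqxx (eq_sym y) xy eqxx zx.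
Qed.

Lemma next_exit (s : seq T) (P : pred T) x y : uniq s -> x \in s -> y \in s ->
  P x -> ~~ P y -> exists2 z, z \in s & P z && ~~ P (next s z).
Proof.
move=> us xs ys Px Py.
have : fconnect (next s) x y by rewrite (fconnect_cycle (cycle_next us) xs).
case/connectP => p; elim: p x xs Px => [|z p IH] x xs Px /=.
  by move=> _ eyx; rewrite eyx Px in Py.
case/andP => /eqP nx pth ey; subst z.
case Pz: (P (next s x)); last by exists x => //; rewrite Px Pz.
by apply: (IH (next s x) _ Pz pth ey); rewrite mem_next.
Qed.

(* Leaving [A] and coming back would force [next s (next s a0) = a0]. *)
Lemma cycle_one_side (e : rel T) (A B : {set T}) a0 b0 s :
  symmetric e -> (forall x y, x \in A -> y \in B -> e x y -> x = a0 /\ y = b0) ->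
  uniq s -> 2 < size s -> cycle e s -> {subset s <= A :|: B} ->
  all [in A] s || all [in B] s.
Proof.
move=> esym bridge us ss cs sAB.
apply: contraT => /norP[]; rewrite -!has_predC => /hasP[x xs xA] /hasP[y ys yB].
have side z : z \in s -> z \notin A -> z \in B.
  by move=> zs; have := sAB z zs; rewrite inE => /orP[->|].
have yA : y \in A by apply: contraR yB; exact: side.
have xB : x \in B by exact: side.
have [z zs /andP[zA nzA]] := next_exit (P := mem A) us ys xs yA xA.
have [w ws /andP[wB nwB]] := next_exit (P := mem B) us xs ys xB yB.
have nzB : next s z \in B by apply: side; rewrite ?mem_next.
have nwA : next s w \in A by apply: contraR nwB; apply: side; rewrite mem_next.
have [ez enz] := bridge _ _ zA nzB (next_cycle cs zs).
have [enw ew] : next s w = a0 /\ w = b0.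
  by apply: bridge => //; rewrite esym; exact: next_cycle.
by have := next_next_neq us ss zs; rewrite enz -ew enw ez eqxx.
Qed.
End FinGraphs.

(** * Subtrees across a bridge *)

Section Subtrees.
Variables (T : finType) (g : rel T).
Hypothesis gsym : symmetric g.
Local Notation subgraph := ({set T} * {set {set T}})%type.

Definition edges_in (S : {set T}) (F : {set {set T}}) :=
  forall e, e \in F -> exists u v, [/\ u \in S, v \in S, g u v & e = [set u; v]].

Lemma edges_in_rel S F x y : edges_in S F -> edge_rel F x y ->
  [/\ x \in S, y \in S & g x y].
Proof.
move=> SF /SF [u [v [uS vS guv /set2_eq_cases]]].
by case=> [[-> ->]|[-> ->]]; split; rewrite // gsym.
Qed.

Lemma edges_in_mem S F e x : edges_in S F -> e \in F -> x \in e -> x \in S.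
Proof. by move=> SF /SF [u [v [uS vS _ ->]]] /set2P [->|->]. Qed.

Definition subtrees_in (U : {set T}) : {set subgraph} :=
  [set x | `[< is_subtree g x.1 x.2 >] & x.1 \subset U].

Definition subtrees_at (U : {set T}) (v : T) : {set subgraph} :=
  [set x in subtrees_in U | v \in x.1].

Lemma subtrees_inP (U : {set T}) x :
  reflect (is_subtree g x.1 x.2 /\ x.1 \subset U) (x \in subtrees_in U).
Proof. by rewrite inE; apply: (iffP andP) => -[/asboolP ? ?]; split => //; apply/asboolP. Qed.

Lemma subtrees_atE (U : {set T}) v x :
  (x \in subtrees_at U v) = [&& `[< is_subtree g x.1 x.2 >], x.1 \subset U & v \in x.1].
Proof. by rewrite !inE andbA. Qed.

Section Bridge.
Variables (A B : {set T}) (a0 b0 : T).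
Hypotheses (dAB : [disjoint A & B]) (Aa0 : a0 \in A) (Bb0 : b0 \in B) (gab : g a0 b0).
Hypothesis bridge : forall x y, x \in A -> y \in B -> g x y -> x = a0 /\ y = b0.

Let notAB x : x \in A -> x \in B -> False.
Proof. by move=> xA; rewrite (disjointFr dAB xA). Qed.

Definition glue (x : subgraph * subgraph) : subgraph :=
  (x.1.1 :|: x.2.1, x.1.2 :|: x.2.2 :|: [set [set a0; b0]]).

Lemma glue_edges_in S1 F1 S2 F2 :
  edges_in S1 F1 -> a0 \in S1 -> edges_in S2 F2 -> b0 \in S2 ->
  edges_in (S1 :|: S2) (F1 :|: F2 :|: [set [set a0; b0]]).
Proof.
move=> ed1 a1 ed2 b2 e; rewrite !inE => /orP[/orP[/ed1|/ed2]|/eqP->].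
- by case=> u [v [uS vS guv ->]]; exists u, v; rewrite !inE uS vS.
- by case=> u [v [uS vS guv ->]]; exists u, v; rewrite !inE uS vS !orbT.
- by exists a0, b0; rewrite !inE a1 b2 orbT.
Qed.

Lemma glue_cycle S1 F1 S2 F2 (F := F1 :|: F2 :|: [set [set a0; b0]]) s :
  edges_in S1 F1 -> S1 \subset A -> edges_in S2 F2 -> S2 \subset B -> edges_in (S1 :|: S2) F ->
  uniq s -> 2 < size s -> cycle (edge_rel F) s -> cycle (edge_rel F1) s \/ cycle (edge_rel F2) s.
Proof.
move=> ed1 sA ed2 sB ed us ss cs.
have sS : {subset s <= A :|: B}.
  move=> x /(next_cycle cs) /(edges_in_rel ed) [+ _ _].
  by rewrite !inE => /orP[/(subsetP sA)->|/(subsetP sB)->]; rewrite ?orbT.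
have bridgeF x y : x \in A -> y \in B -> edge_rel F x y -> x = a0 /\ y = b0.
  by move=> xA yB /(edges_in_rel ed) [_ _]; exact: bridge.
have inF1 x y : x \in A -> y \in A -> edge_rel F x y -> edge_rel F1 x y.
  move=> xA yA; rewrite /edge_rel !inE.
  case/orP=> [/orP[//|/(edges_in_rel ed2)[xS _ _]]|/eqP/set2_eq_cases].
    by case: (notAB xA (subsetP sB _ xS)).
  by case=> -[? ?]; subst; [case: (notAB yA Bb0) | case: (notAB xA Bb0)].
have inF2 x y : x \in B -> y \in B -> edge_rel F x y -> edge_rel F2 x y.
  move=> xB yB; rewrite /edge_rel !inE.
  case/orP=> [/orP[/(edges_in_rel ed1)[xS _ _]|//]|/eqP/set2_eq_cases].
    by case: (notAB (subsetP sA _ xS) xB).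
  by case=> -[? ?]; subst; [case: (notAB Aa0 xB) | case: (notAB Aa0 yB)].
case/orP: (cycle_one_side (@edge_rel_sym _ F) bridgeF us ss cs sS) => [allA|allB].
- by left; exact: (sub_in_cycle (P := mem A) inF1).
- by right; exact: (sub_in_cycle (P := mem B) inF2).
Qed.

Lemma glue_subtree S1 F1 S2 F2 :
  is_subtree g S1 F1 -> S1 \subset A -> a0 \in S1 ->
  is_subtree g S2 F2 -> S2 \subset B -> b0 \in S2 ->
  is_subtree g (S1 :|: S2) (F1 :|: F2 :|: [set [set a0; b0]]).
Proof.
case=> [ne1 ed1 cn1 ac1] sA a1 [ne2 ed2 cn2 ac2] sB b2.
have ed := glue_edges_in ed1 a1 ed2 b2; set F := F1 :|: F2 :|: _ in ed *.
have sF1 : F1 \subset F by rewrite /F -setUA subsetUl.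
have sF2 : F2 \subset F by rewrite /F -setUA setUCA subsetUl.
have to_a0 u : u \in S1 :|: S2 -> connect (edge_rel F) u a0.
  rewrite inE => /orP[uS|uS]; first exact: connect_edge_relS sF1 _ _ (cn1 _ _ uS a1).
  apply: connect_trans (connect_edge_relS sF2 (cn2 _ _ uS b2)) (connect1 _).
  by rewrite /edge_rel setUC !inE eqxx orbT.
split => //.
- by apply/set0Pn; exists a0; rewrite inE a1.
- move=> u v uS vS; apply: connect_trans (to_a0 u uS) _.
  by rewrite (sym_connect_sym (@edge_rel_sym _ F)) to_a0.
case=> s [us ss cs]; have [c1|c2] := glue_cycle ed1 sA ed2 sB ed us ss cs.
- by apply: ac1; exists s.
- by apply: ac2; exists s.
Qed.

Section Crossing.
Variables (S : {set T}) (F : {set {set T}}).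
Hypotheses (tS : is_subtree g S F) (sAB : S \subset A :|: B).
Hypotheses (nsA : ~~ (S \subset A)) (nsB : ~~ (S \subset B)).

Let side x : x \in S -> (x \in A) || (x \in B).
Proof. by move=> xS; rewrite -in_setU (subsetP sAB). Qed.

Lemma crossing_bridge : [set a0; b0] \in F.
Proof.
case: tS => [_ ed cn _].
have [u uS uA] := subsetPn nsA; have [v vS vB] := subsetPn nsB.
have uB : u \in B by case/orP: (side uS) => // h; rewrite h in uA.
have vA : v \in A by case/orP: (side vS) => // h; rewrite h in vB.
have cross p x : path (edge_rel F) x p -> x \in A -> last x p \in B -> [set a0; b0] \in F.
  elim: p x => [|z p IH] x /=; first by move=> _ xA /(notAB xA).
  case/andP=> exz pz xA lB; have [_ zS gxz] := edges_in_rel ed exz.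
  case/orP: (side zS) => [zA|zB]; first exact: IH pz zA lB.
  by case: (bridge xA zB gxz) => ex ez; rewrite -ex -ez.
by case/connectP: (cn v u vS uS) => p pth lst; apply: (cross p v); rewrite -?lst.
Qed.

Lemma crossing_mem_a0 : a0 \in S.
Proof. by case: tS => [_ ed _ _]; apply: edges_in_mem ed crossing_bridge (set21 _ _). Qed.

Lemma crossing_restrict : is_subtree g (S :&: A) [set e in F | e \subset A].
Proof.
have a0S := crossing_mem_a0; case: tS => [_ ed cn ac].
set FA := [set e in F | e \subset A].
have edgeFA x y : x \in A -> y \in A -> edge_rel F x y -> edge_rel FA x y.
  by move=> xA yA; rewrite /edge_rel inE subUset !sub1set xA yA => ->.
have stay p x : path (edge_rel F) x p -> last x p \in A ->
    (x \in A -> connect (edge_rel FA) x (last x p)) /\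
    (x \in B -> connect (edge_rel FA) a0 (last x p)).
  elim: p x => [|z p IH] x /=; first by move=> _ xA; split => // /(notAB xA).
  case/andP=> exz pz lA; have [xS zS gxz] := edges_in_rel ed exz.
  have [IHA IHB] := IH z pz lA.
  split=> [xA|xB]; case/orP: (side zS) => [zA|zB].
  - exact: connect_trans (connect1 (edgeFA _ _ xA zA exz)) (IHA zA).
  - by case: (bridge xA zB gxz) => -> _; exact: IHB.
  - by rewrite gsym in gxz; case: (bridge zA xB gxz) => <- _; exact: IHA.
  - exact: IHB.
split.
- by apply/set0Pn; exists a0; rewrite inE a0S.
- move=> e; rewrite inE => /andP[eF eA]; have [u [v [uS vS guv ee]]] := ed e eF.
  by exists u, v; rewrite !inE uS vS !(subsetP eA) // ee ?set21 ?set22.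
- move=> u w; rewrite !inE => /andP[uS uA] /andP[wS wA].
  case/connectP: (cn u w uS wS) => p pth lst.
  have lA : last u p \in A by rewrite -lst.
  by have [toA _] := stay p u pth lA; rewrite lst; exact: toA.
- case=> s [us ss cs]; apply: ac; exists s; split => //.
  by apply: sub_cycle cs => x y; rewrite /edge_rel inE => /andP[].
Qed.

Lemma crossing_edges :
  F = [set e in F | e \subset A] :|: [set e in F | e \subset B] :|: [set [set a0; b0]].
Proof.
have bF := crossing_bridge; case: tS => [_ ed _ _].
apply/setP => e; rewrite !inE; apply/idP/idP; last first.
  by case/orP=> [/orP[/andP[]|/andP[]]|/eqP->].
move=> eF; rewrite eF /=; have [u [v [uS vS guv ->]]] := ed e eF.
rewrite !subUset !sub1set.
case/orP: (side uS) => [uA|uB]; case/orP: (side vS) => [vA|vB].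
- by rewrite uA vA.
- by case: (bridge uA vB guv) => -> ->; rewrite eqxx !orbT.
- by rewrite gsym in guv; case: (bridge vA uB guv) => -> ->; rewrite setUC eqxx !orbT.
- by rewrite uB vB orbT.
Qed.

End Crossing.

Lemma glue_restrict S1 F1 S2 F2 :
  is_subtree g S1 F1 -> S1 \subset A -> is_subtree g S2 F2 -> S2 \subset B ->
  (S1 :|: S2) :&: A = S1 /\ [set e in F1 :|: F2 :|: [set [set a0; b0]] | e \subset A] = F1.
Proof.
case=> [_ ed1 _ _] sA [_ ed2 _ _] sB; split.
  apply/setP => x; rewrite !inE; case x1: (x \in S1); first by rewrite (subsetP sA).
  by apply/andP => -[x2 xA]; exact: notAB xA (subsetP sB _ x2).
apply/setP => e; rewrite !inE.
case e1: (e \in F1).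
  by have [u [v [uS vS _ ->]]] := ed1 e e1; rewrite subUset !sub1set !(subsetP sA).
apply/andP => -[/orP[e2|/eqP->]].
  have [u [v [uS vS _ ->]]] := ed2 e e2; rewrite subUset sub1set => /andP[uA _].
  exact: notAB uA (subsetP sB _ uS).
by rewrite subUset !sub1set => /andP[_ /notAB]; apply.
Qed.

End Bridge.

Section BridgeCount.
Variables (A B : {set T}) (a0 b0 : T).
Hypotheses (dAB : [disjoint A & B]) (Aa0 : a0 \in A) (Bb0 : b0 \in B) (gab : g a0 b0).
Hypothesis bridge : forall x y, x \in A -> y \in B -> g x y -> x = a0 /\ y = b0.

Let dBA : [disjoint B & A]. Proof. by rewrite disjoint_sym. Qed.
Let bridgeBA x y : x \in B -> y \in A -> g x y -> x = b0 /\ y = a0.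
Proof. by move=> xB yA; rewrite gsym => /(bridge yA xB) []. Qed.
Let notAB x : x \in A -> x \in B -> False.
Proof. by move=> xA; rewrite (disjointFr dAB xA). Qed.

Local Notation pairs := (setX (subtrees_at A a0) (subtrees_at B b0)).

Lemma mem_glue_pairs x : x \in pairs -> a0 \in (glue a0 b0 x).1 /\ b0 \in (glue a0 b0 x).1.
Proof.
case: x => -[S1 F1] [S2 F2]; rewrite in_setX !subtrees_atE /=.
by case/andP=> /and3P[_ _ a1] /and3P[_ _ b2]; rewrite !inE a1 b2 orbT.
Qed.

Lemma glue_inj : {in pairs &, injective (glue a0 b0)}.
Proof.
move=> [[S1 F1] [S2 F2]] [[S1' F1'] [S2' F2']].
rewrite !in_setX !subtrees_atE /= => /andP[/and3P[/asboolP t1 s1 _] /and3P[/asboolP t2 s2 _]].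
case/andP=> [/and3P[/asboolP t1' s1' _] /and3P[/asboolP t2' s2' _]] [ES EF].
have [hS1 hF1] := glue_restrict a0 dAB Bb0 t1 s1 t2 s2.
have [hS1' hF1'] := glue_restrict a0 dAB Bb0 t1' s1' t2' s2'.
have [hS2 hF2] := glue_restrict b0 dBA Aa0 t2 s2 t1 s1.
have [hS2' hF2'] := glue_restrict b0 dBA Aa0 t2' s2' t1' s1'.
rewrite [S2 :|: _]setUC [S2' :|: _]setUC in hS2 hS2'.
rewrite [F2 :|: _]setUC [F2' :|: _]setUC [[set b0; a0]]setUC in hF2 hF2'.
by congr ((_, _), (_, _)); [rewrite -hS1 -hS1' | rewrite -hF1 -hF1' | rewrite -hS2 -hS2'
  | rewrite -hF2 -hF2']; rewrite ?ES ?EF.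
Qed.

Lemma subtrees_in_bridge : subtrees_in (A :|: B) =
  subtrees_in A :|: subtrees_in B :|: glue a0 b0 @: pairs.
Proof.
apply/setP => -[S F]; apply/idP/idP.
- case/subtrees_inP => /= tS sAB; rewrite !inE /= (asboolT tS) /=.
  case: (boolP (S \subset A)) => [//|nsA]; case: (boolP (S \subset B)) => [//|nsB] /=.
  have sBA : S \subset B :|: A by rewrite setUC.
  apply/imsetP.
  exists ((S :&: A, [set e in F | e \subset A]), (S :&: B, [set e in F | e \subset B])).
    rewrite in_setX !subtrees_atE /= !subsetIr !inE Aa0 Bb0 !andbT.
    rewrite (crossing_mem_a0 dAB bridge tS sAB nsA nsB).
    rewrite (crossing_mem_a0 dBA bridgeBA tS sBA nsB nsA).
    by rewrite (asboolT (crossing_restrict dAB Aa0 bridge tS sAB nsA nsB))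
      (asboolT (crossing_restrict dBA Bb0 bridgeBA tS sBA nsB nsA)).
  rewrite /glue /= -(crossing_edges dAB bridge tS sAB nsA nsB) -setIUr.
  by have /setIidPl -> := sAB.
- rewrite !in_setU => /orP[/orP[|]|].
  + case/subtrees_inP => tS sA; apply/subtrees_inP; split => //.
    exact: subset_trans sA (subsetUl _ _).
  + case/subtrees_inP => tS sB; apply/subtrees_inP; split => //.
    exact: subset_trans sB (subsetUr _ _).
  + case/imsetP => -[[S1 F1] [S2 F2]]; rewrite in_setX !subtrees_atE /=.
    case/andP=> [/and3P[/asboolP t1 s1 a1] /and3P[/asboolP t2 s2 b2]] [-> ->].
    apply/subtrees_inP; split => /=; last exact: setUSS.
    exact (glue_subtree dAB Aa0 Bb0 gab bridge t1 s1 a1 t2 s2 b2).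
Qed.

Lemma card_subtrees_bridge : #|subtrees_in (A :|: B)| =
  #|subtrees_in A| + #|subtrees_in B| + #|subtrees_at A a0| * #|subtrees_at B b0|.
Proof.
rewrite subtrees_in_bridge cardsU (cardsU (subtrees_in A)) -cardsX (card_in_imset glue_inj).
have -> : subtrees_in A :&: subtrees_in B = set0.
  apply/setP => x; rewrite !inE; apply/negP => /andP[/andP[/asboolP[/set0Pn[y yx] _ _ _] sA]].
  by case/andP=> _ sB; exact: notAB (subsetP sA _ yx) (subsetP sB _ yx).
have -> : (subtrees_in A :|: subtrees_in B) :&: glue a0 b0 @: pairs = set0.
  apply/setP => x; rewrite in_setI in_set0; apply/negP.
  case/andP=> + /imsetP[y /mem_glue_pairs[ya0 yb0] exy]; rewrite exy in_setU.
  case/orP=> /subtrees_inP[_ sy]; first exact: notAB (subsetP sy _ yb0) Bb0.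
  exact: notAB Aa0 (subsetP sy _ ya0).
by rewrite !cards0 !subn0.
Qed.

Lemma card_subtrees_at_bridge v : v \in A -> #|subtrees_at (A :|: B) v| =
  #|subtrees_at A v| + #|[set y in subtrees_at A a0 | v \in y.1]| * #|subtrees_at B b0|.
Proof.
move=> vA; set P := setX [set y in subtrees_at A a0 | v \in y.1] (subtrees_at B b0).
have sP : P \subset pairs by apply: setXS => //; apply/subsetP => y; rewrite inE => /andP[].
have -> : subtrees_at (A :|: B) v = subtrees_at A v :|: glue a0 b0 @: P.
  apply/setP => x; rewrite [LHS]inE subtrees_in_bridge !in_setU.
  apply/idP/idP => [/andP[/orP[/orP[xA|/subtrees_inP[_ sB]]|/imsetP[[y1 y2] yP ->]] vx]|].
  - by rewrite inE xA vx.
  - by case: (notAB vA (subsetP sB _ vx)).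
  - case/setUP: vx => /= [v1|v2].
      apply/orP; right; apply/imsetP; exists (y1, y2) => //.
      by move: yP; rewrite /P !in_setX => /andP[y1A ->]; rewrite andbT; apply/setIdP.
    move: yP; rewrite in_setX !subtrees_atE => /andP[_ /and3P[_ s2 _]].
    by case: (notAB vA (subsetP s2 _ v2)).
  case/orP=> [|/imsetP[[y1 y2] yP ->]]; first by rewrite inE => /andP[-> ->].
  rewrite (imset_f _ (subsetP sP _ yP)) orbT /=.
  by move: yP; rewrite /P in_setX => /andP[/setIdP[_ v1] _]; rewrite inE v1.
rewrite cardsU -cardsX (card_in_imset (sub_in2 (subsetP sP) glue_inj)).
suff -> : subtrees_at A v :&: glue a0 b0 @: P = set0 by rewrite cards0 subn0.
apply/setP => x; rewrite in_setI in_set0; apply/negP.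
case/andP=> /setIdP[/subtrees_inP[_ sx] _] /imsetP[y /(subsetP sP)/mem_glue_pairs[_ yb0] exy].
by rewrite exy in sx; exact: notAB (subsetP sx _ yb0) Bb0.
Qed.

End BridgeCount.
End Subtrees.

(** * Subtrees of a hexagon *)

Definition hdist (a w : 'I_6) : nat := (w + 6 - a) %% 6.

Definition hshift (a : 'I_6) (j : nat) : 'I_6 := Ordinal (ltn_pmod (a + j) (isT : 0 < 6)).

Lemma hdist_lt a w : hdist a w < 6.
Proof. exact: ltn_pmod. Qed.

Lemma hdist_hshift a j : j < 6 -> hdist a (hshift a j) = j.
Proof. rewrite /hdist /=; have := ltn_ord a; lia. Qed.

Lemma hshift_hdist a w : hshift a (hdist a w) = w.
Proof. apply: val_inj; rewrite /hdist /=; have := ltn_ord a; have := ltn_ord w; lia. Qed.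

Lemma hshift0 a : hshift a 0 = a.
Proof. by apply: val_inj; rewrite /= addn0 modn_small. Qed.

Lemma ordS_hshift a j : ordS (hshift a j) = hshift a j.+1.
Proof. by apply: val_inj => /=; rewrite -addn1 modnDml addn1 addnS. Qed.

Lemma hdist_ordS a w : hdist a w < 5 -> hdist a (ordS w) = (hdist a w).+1.
Proof. rewrite /hdist /=; have := ltn_ord a; have := ltn_ord w; lia. Qed.

Lemma hdist_rebase a a' w : hdist a' w = (hdist a w + 6 - hdist a a') %% 6.
Proof. rewrite /hdist; have := ltn_ord a; have := ltn_ord a'; have := ltn_ord w; lia. Qed.

Lemma hdist_hshift_window a w lo hi : lo <= hi < 6 ->
  (hdist (hshift a lo) w <= hi - lo) = (lo <= hdist a w <= hi) /\
  (hdist (hshift a lo) w < hi - lo) = (lo <= hdist a w < hi).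
Proof. rewrite /hdist /=; have := ltn_ord a; have := ltn_ord w => *; split; lia. Qed.

Lemma hex_adj_ordS w : hex_adj w (ordS w).
Proof. by rewrite /hex_adj eqxx. Qed.

Lemma ordS_ordS_neq (w : 'I_6) : ordS (ordS w) != w.
Proof. rewrite -val_eqE /=; have := ltn_ord w; lia. Qed.

Lemma hex_adj_hdist (w0 a b : 'I_6) : hex_adj a b ->
  ~~ ((a == w0) && (b == ordS w0)) -> ~~ ((b == w0) && (a == ordS w0)) ->
  (hdist (ordS w0) b == (hdist (ordS w0) a).+1) || (hdist (ordS w0) a == (hdist (ordS w0) b).+1).
Proof.
rewrite /hex_adj /hdist -!val_eqE /=.
have := ltn_ord w0; have := ltn_ord a; have := ltn_ord b; lia.
Qed.

(* With [d := hdist a a'], the hypotheses compare [u <= m] with [(u - d) mod 6 <= m'];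
   [d = 0] forces [m = m'], and any other [d] is refuted at [u = 0, d, 5]. *)
Lemma arc_params_inj (a a' m m' : 'I_6) :
  (forall w, (hdist a w <= m) = (hdist a' w <= m')) ->
  (forall w, (hdist a w < m) = (hdist a' w < m')) -> a = a' /\ m = m'.
Proof.
move=> h1 h2; have d6 := hdist_lt a a'.
have key u : u < 6 -> ((u <= m) = ((u + 6 - hdist a a') %% 6 <= m')) /\
                      ((u < m) = ((u + 6 - hdist a a') %% 6 < m')).
  by move=> u6; rewrite -{1 3}(hdist_hshift a u6) h1 h2 (hdist_rebase a) hdist_hshift.
have := ltn_ord m; have := ltn_ord m'.
case: (posnP (hdist a a')) => [d0|dpos] *.
  split; first by rewrite -(hshift_hdist a a') d0 hshift0.
  have [k1 _] := key m (ltn_ord m); have [k2 _] := key m' (ltn_ord m').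
  by apply: val_inj => /=; move: k1 k2; rewrite d0; lia.
have [k1 k2] := key 0 isT; have [k3 k4] := key _ d6; have [k5 k6] := key 5 isT.
by move: k1 k2 k3 k4 k5 k6; lia.
Qed.

Lemma card_pairs6 (P : nat -> nat -> bool) :
  #|[set i : 'I_6 * 'I_6 | P i.1 i.2]| = \sum_(0 <= a < 6) \sum_(0 <= m < 6) P a m.
Proof.
transitivity (\sum_(a : 'I_6) \sum_(m : 'I_6) (P a m : nat)).
  rewrite pair_bigA /= -sum1_card big_mkcond; apply: eq_bigr => -[a m] _.
  by rewrite inE /=; case: (P a m).
by rewrite big_mkord; apply: eq_bigr => a _; rewrite big_mkord.
Qed.

Lemma card_arcs_through w : #|[set i : 'I_6 * 'I_6 | hdist i.1 w <= i.2]| = 21.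
Proof.
rewrite (card_pairs6 (fun a m => (w + 6 - a) %% 6 <= m)).
by case: w => [[|[|[|[|[|[|//]]]]]] ?]; rewrite unlock.
Qed.

(* Arcs through two vertices at distance [c + 1], i.e. ortho, meta, para. *)
Definition pair_arcs (c : 'I_3) : nat := nth 0 [:: 16; 13; 12] c.

Lemma card_arcs_through2 (c : 'I_3) (w : 'I_6) : w = c.+1 :> nat ->
  #|[set i : 'I_6 * 'I_6 | (hdist i.1 w <= i.2) && (hdist i.1 ord0 <= i.2)]| = pair_arcs c.
Proof.
move=> wc; rewrite (card_pairs6 (fun a m => ((w + 6 - a) %% 6 <= m) && ((0 + 6 - a) %% 6 <= m))).
by rewrite wc; case: c {wc} => [[|[|[|//]]] ?]; rewrite unlock.
Qed.

Section Hexagon.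
Variables (N : nat) (t : seq 'I_3).
Local Notation T := ('I_N * 'I_6)%type.
Local Notation g := (@pc_adj N t).

Lemma pc_adj_sym : symmetric g.
Proof.
move=> [i a] [j b]; rewrite /pc_adj /hex_adj /= (eq_sym j i).
by rewrite (orbC (b.+1 %% 6 == a :> nat)) [X in _ || X]orbC.
Qed.

Variable k : 'I_N.

Definition hexagon : {set T} := [set x : T | x.1 == k].
Definition hvert (w : 'I_6) : T := (k, w).
Definition hside (w : 'I_6) : {set T} := [set hvert w; hvert (ordS w)].
(* [arc (a, m)] is the path of [m] consecutive sides starting at vertex [a]. *)
Definition arc_verts (a m : 'I_6) : {set T} := [set x in hexagon | hdist a x.2 <= m].
Definition arc_edges (a m : 'I_6) : {set {set T}} := hside @: [set w | hdist a w < m].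
Definition arc (i : 'I_6 * 'I_6) := (arc_verts i.1 i.2, arc_edges i.1 i.2).

Lemma hvertE x : x \in hexagon -> x = hvert x.2.
Proof. by case: x => i w; rewrite inE /= => /eqP ->. Qed.

Lemma hvert_hexagon w : hvert w \in hexagon.
Proof. by rewrite inE. Qed.

Lemma hvert_inj : injective hvert.
Proof. by move=> a b []. Qed.

Lemma pc_adj_hexagon x y : x \in hexagon -> y \in hexagon -> g x y = hex_adj x.2 y.2.
Proof.
move=> /hvertE -> /hvertE ->; rewrite /pc_adj /= eqxx /=.
by rewrite (ltn_eqF (ltnSn k)) /= orbF.
Qed.

Lemma pc_adj_hside w : g (hvert w) (hvert (ordS w)).
Proof. by rewrite pc_adj_hexagon ?hvert_hexagon ?hex_adj_ordS. Qed.

Lemma hside_inj : injective hside.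
Proof.
move=> w w' /set2_eq_cases [[/hvert_inj -> _]|[/hvert_inj e1 /hvert_inj e2]] //.
by move: (ordS_ordS_neq w'); rewrite -e1 e2 eqxx.
Qed.

Lemma mem_arc_edges a m w : (hside w \in arc_edges a m) = (hdist a w < m).
Proof. by rewrite /arc_edges mem_imset ?inE //; exact: hside_inj. Qed.

Lemma mem_arc_verts a m w : (hvert w \in arc_verts a m) = (hdist a w <= m).
Proof. by rewrite !inE /= eqxx. Qed.

Section MissingSide.
Variables (S : {set T}) (F : {set {set T}}) (w0 : 'I_6).
Hypotheses (sH : S \subset hexagon) (ed : edges_in g S F) (nF : hside w0 \notin F).
(* Without the side [w0 -- ordS w0] the hexagon is a path, along which [pos] is the position. *)
Local Notation r := (ordS w0).
Let pos (x : T) := hdist r x.2.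

Lemma pos_step x y : edge_rel F x y ->
  [/\ x \in S, y \in S & (pos y == (pos x).+1) || (pos x == (pos y).+1)].
Proof.
move=> exy; have [xS yS gxy] := edges_in_rel pc_adj_sym ed exy.
have xH := subsetP sH _ xS; have yH := subsetP sH _ yS.
rewrite pc_adj_hexagon // in gxy; split => //; apply: hex_adj_hdist gxy _ _.
- apply: contra nF => /andP[/eqP xw /eqP yw].
  by rewrite /hside -yw -xw -(hvertE xH) -(hvertE yH).
- apply: contra nF => /andP[/eqP yw /eqP xw].
  by rewrite /hside -xw -yw -(hvertE xH) -(hvertE yH) setUC.
Qed.

Lemma pos_inj : {in hexagon &, injective pos}.
Proof.
move=> x y /hvertE -> /hvertE -> /= e; congr hvert; rewrite /pos /= in e.
by rewrite -(hshift_hdist r x.2) -(hshift_hdist r y.2) e.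
Qed.

Lemma hside_pos u v : u \in hexagon -> v \in hexagon -> pos v = (pos u).+1 ->
  [set u; v] = hside u.2.
Proof.
move=> uH vH; rewrite /pos => e; rewrite /hside {1}(hvertE uH) (hvertE vH).
by rewrite -(hshift_hdist r v.2) -(hshift_hdist r u.2) ordS_hshift e.
Qed.

(* At a vertex of maximal [pos], both cycle neighbours would be at [pos - 1]. *)
Lemma acyclic_missing_side : ~ exists s, [/\ uniq s, 2 < size s & cycle (edge_rel F) s].
Proof.
move=> [s [us ss cs]].
have [x0 x0s] : exists x0, x0 \in s by case: s ss {us cs} => // x0 s' _; exists x0; exact: mem_head.
case: (@arg_maxnP _ x0 (mem s) pos x0s) => xm xms xmax.
have y1s : prev s xm \in s by rewrite mem_prev.
have y2s : next s xm \in s by rewrite mem_next.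
have [y1S _ st1] := pos_step (prev_cycle cs xms).
have [_ y2S st2] := pos_step (next_cycle cs xms).
have le1 : pos (prev s xm) <= pos xm := xmax _ y1s.
have le2 : pos (next s xm) <= pos xm := xmax _ y2s.
have p1 : pos xm = (pos (prev s xm)).+1.
  by case/orP: st1 => /eqP h; [exact: h | exfalso; rewrite h ltnn in le1].
have p2 : pos xm = (pos (next s xm)).+1.
  by case/orP: st2 => /eqP h; [exfalso; rewrite h ltnn in le2 | exact: h].
have e : prev s xm = next s xm.
  apply: pos_inj; [exact: subsetP sH _ y1S | exact: subsetP sH _ y2S |].
  exact: succn_inj (etrans (esym p1) p2).
by have := next_next_neq us ss y1s; rewrite next_prev // -e eqxx.
Qed.

Lemma path_sides p x : path (edge_rel F) x p ->
  forall j, pos x <= j < pos (last x p) -> hside (hshift r j) \in F.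
Proof.
elim: p x => [|z p IH] x /=.
  by move=> _ j /andP[a b]; have := leq_ltn_trans a b; rewrite ltnn.
case/andP=> exz pz j /andP[lj jl]; have [xS zS st] := pos_step exz.
have xH := subsetP sH _ xS; have zH := subsetP sH _ zS.
case/orP: st => /eqP hz; last by apply: (IH z pz); rewrite jl andbT (leq_trans _ lj) // hz.
case: (ltngtP j (pos x)) lj => // [lt _|eq _]; first by apply: (IH z pz); rewrite hz lt jl.
by rewrite eq hshift_hdist -(hside_pos xH zH hz).
Qed.

Hypothesis tS : is_subtree g S F.

Lemma subtree_window : exists lo hi, [/\ lo <= hi < 6,
  {in hexagon, forall x, (x \in S) = (lo <= pos x <= hi)} &
  forall j, lo <= j < hi -> hside (hshift r j) \in F].
Proof.
case: tS => [/set0Pn[x0 x0S] _ cn _].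
case: (@arg_minnP _ x0 (mem S) pos x0S) => xl xlS xlmin.
case: (@arg_maxnP _ x0 (mem S) pos x0S) => xh xhS xhmax.
have inF j : pos xl <= j < pos xh -> hside (hshift r j) \in F.
  by case/connectP: (cn xl xh xlS xhS) => p pth ->; exact: path_sides.
exists (pos xl), (pos xh); split => //; first by rewrite (xlmin xh xhS) hdist_lt.
move=> x xH; apply/idP/idP => [xS|/andP[lx]]; first by rewrite (xlmin x xS); exact: xhmax.
rewrite leq_eqVlt => /orP[/eqP e|xh']; last first.
  apply: (edges_in_mem ed (inF _ (introT andP (conj lx xh')))).
  by rewrite hshift_hdist {1}(hvertE xH) set21.
by rewrite (pos_inj xH (subsetP sH _ xhS) e).
Qed.

Lemma subtree_arc : exists i, (S, F) = arc i.
Proof.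
have [lo [hi [/andP[lohi hi6] inS inF]]] := subtree_window.
have m6 : hi - lo < 6 by apply: leq_ltn_trans (leq_subr _ _) hi6.
have window := hdist_hshift_window r _ (introT andP (conj lohi hi6)).
exists (hshift r lo, Ordinal m6); congr pair; apply/setP.
  move=> x; apply/idP/setIdP => [xS|[xH]]; rewrite /= (window x.2).1.
    by have xH := subsetP sH _ xS; rewrite -(inS x xH).
  by rewrite -(inS x xH).
move=> e; apply/idP/imsetP => [eF|[w]]; last first.
  by rewrite inE (window w).2 => hw ->; rewrite -(hshift_hdist r w); exact: inF.
have [u [v [uS vS guv ee]]] := ed eF.
have uH := subsetP sH _ uS; have vH := subsetP sH _ vS.
have euv : edge_rel F u v by rewrite /edge_rel -ee.
have /andP[lu uh] : lo <= pos u <= hi by rewrite -(inS u uH).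
have /andP[lv vh] : lo <= pos v <= hi by rewrite -(inS v vH).
have [_ _ /orP[]/eqP h] := pos_step euv.
- exists u.2; last by rewrite ee (hside_pos uH vH h).
  by rewrite inE (window _).2 lu -/(pos u) -h.
- exists v.2; last by rewrite ee setUC (hside_pos vH uH h).
  by rewrite inE (window _).2 lv -/(pos v) -h.
Qed.

End MissingSide.

Lemma arc_subtree i : arc i \in subtrees_in g hexagon.
Proof.
case: i => a m; apply/subtrees_inP => /=.
have sH : arc_verts a m \subset hexagon by apply/subsetP => x /setIdP[].
have m5 : m <= 5 by rewrite -ltnS.
have ed : edges_in g (arc_verts a m) (arc_edges a m).
  move=> e /imsetP[w]; rewrite inE => hw ->.
  exists (hvert w), (hvert (ordS w)); rewrite !mem_arc_verts pc_adj_hside ltnW //.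
  by rewrite hdist_ordS ?(leq_trans hw).
split => //; split => //.
- by apply/set0Pn; exists (hvert (hshift a 0)); rewrite mem_arc_verts hdist_hshift.
- have from_a j : j <= m -> connect (edge_rel (arc_edges a m)) (hvert a) (hvert (hshift a j)).
    elim: j => [|j IH] jm; first by rewrite hshift0 connect0.
    apply: connect_trans (IH (ltnW jm)) (connect1 _).
    by rewrite /edge_rel -ordS_hshift mem_arc_edges hdist_hshift // (ltn_trans jm).
  have to_all u : u \in arc_verts a m -> connect (edge_rel (arc_edges a m)) (hvert a) u.
    move=> uS; have /hvertE uE := subsetP sH _ uS.
    by rewrite uE -(hshift_hdist a u.2); apply: from_a; rewrite -mem_arc_verts -uE.
  move=> u v uS vS; apply: connect_trans (to_all v vS).
  by rewrite (sym_connect_sym (@edge_rel_sym _ _)) to_all.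
- apply: (@acyclic_missing_side _ _ (hshift a 5) sH ed).
  by rewrite mem_arc_edges hdist_hshift // ltnNge m5.
Qed.

Lemma subtree_missing_side S F : is_subtree g S F -> exists w0, hside w0 \notin F.
Proof.
case=> [_ _ _ ac]; apply/existsP; apply: contraT; rewrite negb_exists => /forallP allF.
exfalso; apply: ac; pose o j := hshift ord0 j.
have step j : edge_rel F (hvert (o j)) (hvert (o j.+1)).
  by rewrite /edge_rel /o -ordS_hshift; exact/negPn/allF.
have o6 : o 6 = o 0 by apply: val_inj.
exists (map hvert [:: o 0; o 1; o 2; o 3; o 4; o 5]).
by rewrite (map_inj_uniq hvert_inj) /= !step -o6 step.
Qed.

Lemma subtrees_in_hexagon : subtrees_in g hexagon = arc @: setT.
Proof.
apply/setP => -[S F]; apply/idP/imsetP => [/subtrees_inP[tS sH]|[i _ ->]]; last exact: arc_subtree.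
have [w0 nF] := subtree_missing_side tS.
have [_ ed _ _] := tS; have [i ->] := subtree_arc sH ed nF tS.
by exists i.
Qed.

Lemma arc_inj : injective arc.
Proof.
move=> [a m] [a' m'] [ES EF].
have [|| -> -> //] := @arc_params_inj a a' m m' => w.
  by rewrite -!mem_arc_verts ES.
by rewrite -!mem_arc_edges EF.
Qed.

Lemma card_subtrees_hexagon_by_arc (Q : {set T} -> bool) :
  #|[set x in subtrees_in g hexagon | Q x.1]| = #|[set i | Q (arc i).1]|.
Proof.
suff -> : [set x in subtrees_in g hexagon | Q x.1] = arc @: [set i | Q (arc i).1].
  by rewrite (card_imset _ arc_inj).
apply/setP => x.
rewrite inE subtrees_in_hexagon; apply/andP/imsetP => [[/imsetP[i _ ->] Qi]|[i]].
  by exists i; rewrite ?inE.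
by rewrite inE => Qi ->; rewrite imset_f.
Qed.

Lemma card_subtrees_hexagon : #|subtrees_in g hexagon| = 36.
Proof. by rewrite subtrees_in_hexagon (card_imset _ arc_inj) cardsT card_prod card_ord. Qed.

Lemma card_subtrees_at_hexagon w : #|subtrees_at g hexagon (hvert w)| = 21.
Proof.
rewrite (card_subtrees_hexagon_by_arc (fun S => hvert w \in S)) -(card_arcs_through w).
by apply: eq_card => i; rewrite !inE /= eqxx.
Qed.

Lemma card_subtrees_at2_hexagon (c : 'I_3) (w : 'I_6) : w = c.+1 :> nat ->
  #|[set y in subtrees_at g hexagon (hvert w) | hvert ord0 \in y.1]| = pair_arcs c.
Proof.
move=> wc; rewrite -(card_arcs_through2 wc).
transitivity #|[set x in subtrees_in g hexagon | (hvert w \in x.1) && (hvert ord0 \in x.1)]|.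
  by apply: eq_card => x; rewrite !inE andbA.
rewrite (card_subtrees_hexagon_by_arc (fun S => (hvert w \in S) && (hvert ord0 \in S))).
by apply: eq_card => i; rewrite !inE /= !eqxx.
Qed.

End Hexagon.

(** * Polyphenylene chains *)

(* For a chain whose hexagons after the first are attached with types [s]: its number of
   subtrees, and the number of those containing vertex 0 of the first hexagon. *)
Fixpoint stn_chain_entry (s : seq 'I_3) : nat :=
  if s is c :: s' then 21 + pair_arcs c * stn_chain_entry s' else 21.

Fixpoint stn_chain (s : seq 'I_3) : nat :=
  if s is _ :: s' then 36 + stn_chain s' + 21 * stn_chain_entry s' else 36.

Lemma stn_chain_cons (c : 'I_3) (s : seq 'I_3) :
  stn_chain (c :: s) = 36 + stn_chain s + 21 * stn_chain_entry s.
Proof. by []. Qed.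

Lemma STN_subtrees_in (T : finType) (g : rel T) : STN g = #|subtrees_in g setT|.
Proof. by apply: eq_card => x; rewrite !inE subsetT andbT. Qed.

Lemma STN_pc_adj1 (t : seq 'I_3) : STN (@pc_adj 1 t) = stn_chain [::].
Proof.
rewrite STN_subtrees_in (_ : setT = hexagon ord0); first exact: card_subtrees_hexagon.
by apply/setP => -[i w]; rewrite !inE ord1.
Qed.

Section Chain.
Variables (n : nat) (t : seq 'I_3).
Hypothesis size_t : size t = n.
Local Notation T := ('I_n.+2 * 'I_6)%type.
Local Notation g := (@pc_adj n.+2 t).

Definition suffix (j : nat) : {set T} := [set x : T | j <= x.1].
Local Notation hex j := (@inord n.+1 j).

Lemma out_pos_lt h : out_pos t h < 6.
Proof. by rewrite /out_pos; case: (h == 0) => //; apply: leq_ltn_trans (ltn_ord _) _. Qed.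

Definition out_vert (h : nat) : 'I_6 := Ordinal (out_pos_lt h).

Section Step.
Variable j : nat.
Hypothesis jn : j <= n.

Let A := hexagon (hex j).
Let B := suffix j.+1.
Let a0 := hvert (hex j) (out_vert j).
Let b0 := hvert (hex j.+1) ord0.

Let hexj : hex j = j :> nat. Proof. by rewrite inordK // ltnS ltnW. Qed.
Let hexj1 : hex j.+1 = j.+1 :> nat. Proof. by rewrite inordK. Qed.

Lemma suffix_split : suffix j = A :|: B.
Proof. by apply/setP => x; rewrite !inE leq_eqVlt -val_eqE /= hexj eq_sym. Qed.

Lemma suffix_disjoint : [disjoint A & B].
Proof.
rewrite -setI_eq0; apply/eqP/setP => x; rewrite !inE -val_eqE /= hexj.
by case: eqP => // ->; rewrite ltnn.
Qed.

Lemma out_vert_in_hex : a0 \in A. Proof. exact: hvert_hexagon. Qed.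
Lemma entry_in_suffix : b0 \in B. Proof. by rewrite inE /= hexj1. Qed.
Lemma pc_adj_cut : g a0 b0. Proof. by rewrite /pc_adj /= hexj1 hexj !eqxx /= orbT. Qed.

Lemma pc_adj_bridge x y : x \in A -> y \in B -> g x y -> x = a0 /\ y = b0.
Proof.
case: x => i a; case: y => i' b; rewrite !inE /= => /eqP -> hy.
rewrite /pc_adj /= hexj; case/or3P.
- by case/andP => /eqP ei; move: hy; rewrite -ei hexj ltnn.
- case/and3P => /eqP e1 /eqP e2 /eqP e3; split; congr pair; apply: val_inj => //=.
  by rewrite e1 hexj1.
- by case/and3P => /eqP e1; move: hy; rewrite e1 ltnNge leqnSn.
Qed.

Lemma card_subtrees_suffix : #|subtrees_in g (suffix j)| =
  36 + #|subtrees_in g (suffix j.+1)| + 21 * #|subtrees_at g (suffix j.+1) b0|.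
Proof.
rewrite suffix_split (card_subtrees_bridge (@pc_adj_sym _ t) suffix_disjoint
  out_vert_in_hex entry_in_suffix pc_adj_cut pc_adj_bridge).
by rewrite card_subtrees_hexagon card_subtrees_at_hexagon.
Qed.

Lemma card_subtrees_at_suffix : 0 < j -> #|subtrees_at g (suffix j) (hvert (hex j) ord0)| =
  21 + pair_arcs (nth ord0 t j.-1) * #|subtrees_at g (suffix j.+1) b0|.
Proof.
move=> j0; rewrite suffix_split (card_subtrees_at_bridge (@pc_adj_sym _ t) suffix_disjoint
  out_vert_in_hex entry_in_suffix pc_adj_cut pc_adj_bridge (@hvert_hexagon _ (hex j) ord0)).
rewrite card_subtrees_at_hexagon (card_subtrees_at2_hexagon _ _ (c := nth ord0 t j.-1)) //=.
by rewrite /out_pos eqn0Ngt j0.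
Qed.

End Step.

Lemma suffix_last : suffix n.+1 = hexagon (hex n.+1).
Proof. by apply/setP => x; rewrite !inE -val_eqE /= inordK // eqn_leq leq_ord. Qed.

Lemma card_suffix i : i <= n ->
  #|subtrees_in g (suffix (n.+1 - i))| = stn_chain (drop (n - i) t) /\
  #|subtrees_at g (suffix (n.+1 - i)) (hvert (hex (n.+1 - i)) ord0)| =
    stn_chain_entry (drop (n - i) t).
Proof.
elim: i => [|i IH] lein.
  rewrite !subn0 suffix_last card_subtrees_hexagon card_subtrees_at_hexagon.
  by rewrite drop_oversize ?size_t.
have [IHS IHE] := IH (ltnW lein).
have [j nij] : exists j, n - i = j.+1 by exists (n - i.+1); lia.
have -> : n.+1 - i.+1 = j.+1 by lia.
have -> : n - i.+1 = j by lia.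
have e2 : n.+1 - i = j.+2 by lia.
rewrite e2 nij in IHS IHE; rewrite (drop_nth ord0) ?size_t; last lia.
rewrite card_subtrees_suffix; last lia.
by rewrite (@card_subtrees_at_suffix j.+1); [rewrite IHS IHE | lia | ].
Qed.

Lemma STN_pc_adj : STN g = 36 + stn_chain t + 21 * stn_chain_entry t.
Proof.
have [] := card_suffix (leqnn n); rewrite subSnn subnn drop0 => <- <-.
rewrite STN_subtrees_in (_ : setT = suffix 0); last by apply/setP => x; rewrite !inE.
exact: card_subtrees_suffix.
Qed.

End Chain.

(** * Expected subtree number *)

Local Open Scope ring_scope.

Section Expectation.
Variables (R : comPzRingType) (p1 p2 : R).

Definition expect m (f : seq 'I_3 -> R) : R :=
  \sum_(t : m.-tuple 'I_3) (\prod_(k <- t) step_prob p1 p2 k) * f t.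

Lemma expect0 f : expect 0 f = f [::].
Proof.
rewrite /expect (big_pred1 [tuple]) ?big_nil ?mul1r //.
by move=> t; apply/esym/eqP; exact: tuple0.
Qed.

Lemma expect_cons m f :
  expect m.+1 f = \sum_(c : 'I_3) step_prob p1 p2 c * expect m (fun t => f (c :: t)).
Proof.
rewrite /expect (reindex (fun p : 'I_3 * m.-tuple 'I_3 => [tuple of p.1 :: p.2])) /=; last first.
  exists (fun t : m.+1.-tuple 'I_3 => (thead t, [tuple of behead t])).
    by move=> [c t] _ /=; congr pair; apply: val_inj.
  by move=> t _; case/tupleP: t => c t; apply: val_inj.
rewrite -(pair_bigA _ (fun c (t : m.-tuple 'I_3) =>
  (\prod_(k <- c :: t) step_prob p1 p2 k) * f (c :: t))) /=.
by apply: eq_bigr => c _; rewrite mulr_sumr; apply: eq_bigr => t _; rewrite big_cons mulrA.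
Qed.

Lemma expect_lin m (f h : seq 'I_3 -> R) a b :
  expect m (fun t => a * f t + b * h t) = a * expect m f + b * expect m h.
Proof. by rewrite /expect !mulr_sumr -big_split /=; apply: eq_bigr => t _; ring. Qed.

Lemma sum_step_prob (F : 'I_3 -> R) : \sum_(c : 'I_3) step_prob p1 p2 c * F c =
  p1 * F (inord 0) + p2 * F (inord 1) + (1 - p1 - p2) * F (inord 2).
Proof.
rewrite !big_ord_recr big_ord0 /= add0r.
by congr (_ * F _ + _ * F _ + _ * F _); try apply: val_inj; rewrite /= ?inordK.
Qed.

Lemma expect_cons_const m (f h : seq 'I_3 -> R) :
  (forall c (t : m.-tuple 'I_3), f (c :: t) = h t) -> expect m.+1 f = expect m h.
Proof.
move=> fh; rewrite expect_cons (eq_bigr (fun c => step_prob p1 p2 c * expect m h)); last first.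
  by move=> c _; congr (_ * _); apply: eq_bigr => t _; rewrite fh.
by rewrite sum_step_prob; ring.
Qed.

Lemma expect1 m : expect m (fun _ => 1) = 1.
Proof. by elim: m => [|m IH]; rewrite ?expect0 // (@expect_cons_const _ _ (fun=> 1)). Qed.

Local Notation a := (11 + 4 * p1 + p2).
Local Notation b := (12 + 4 * p1 + p2).

Lemma expect_stn_chain_entry m :
  expect m (fun t => (stn_chain_entry t)%:R) * a = 21 * (b ^+ m.+1 - 1).
Proof.
elim: m => [|m IH]; first by rewrite expect0 expr1 /=; ring.
have E c : expect m (fun t => (stn_chain_entry (c :: t))%:R) =
    21 + (pair_arcs c)%:R * expect m (fun t => (stn_chain_entry t)%:R).
  transitivity (expect m (fun t => 21 * 1 + (pair_arcs c)%:R * (stn_chain_entry t)%:R)).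
    by apply: eq_bigr => t _; rewrite /= natrD natrM mulr1.
  by rewrite expect_lin expect1 mulr1.
rewrite expect_cons sum_step_prob !E /pair_arcs !inordK //= exprS.
set X := expect m _ in IH *.
transitivity (21 * a + b * (X * a)); first ring.
by rewrite IH; ring.
Qed.

End Expectation.

Section ClosedForm.
Variables (F : fieldType) (p1 p2 : F).
Local Notation a := (11 + 4 * p1 + p2).
Local Notation b := (12 + 4 * p1 + p2).
Hypothesis a_neq0 : a != 0.

Lemma expect_stn_chain m : expect p1 p2 m (fun t => (stn_chain t)%:R) =
  441 / a ^+ 2 * b ^+ m.+1 + (144 * p1 + 36 * p2 - 45) / a * m.+1%:R - 441 / a ^+ 2.
Proof.
elim: m => [|m IH]; first by rewrite expect0 /=; field.
rewrite (@expect_cons_const _ p1 p2 m _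
  (fun t => 36 * 1 + 1 * (1 * (stn_chain t)%:R + 21 * (stn_chain_entry t)%:R))); last first.
  by move=> c t; rewrite stn_chain_cons natrD natrM natrD; ring.
rewrite !expect_lin expect1 IH.
have -> : expect p1 p2 m (fun t => (stn_chain_entry t)%:R) = 21 * (b ^+ m.+1 - 1) / a.
  by rewrite -expect_stn_chain_entry; field.
rewrite [b ^+ m.+2]exprS -[m.+2]addn2 -[m.+1]addn1 !natrD.
have -> : 144 * p1 + 36 * p2 - 45 = 36 * a - 441 by ring.
have -> : b = a + 1 by ring.
move: a_neq0; set P := (a + 1) ^+ m.+1; set x := a; clearbody P x => x_neq0.
by field.
Qed.

End ClosedForm.

Lemma E_STN_RPC_expect (R : comPzRingType) (p1 p2 : R) n :
  E_STN_RPC p1 p2 n.+1 = expect p1 p2 n (fun t => (stn_chain t)%:R).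
Proof.
case: n => [|m].
  have -> : E_STN_RPC p1 p2 1 = expect p1 p2 0 (fun t => (STN (@pc_adj 1 t))%:R) by [].
  by rewrite !expect0 STN_pc_adj1.
have -> : E_STN_RPC p1 p2 m.+2 = expect p1 p2 (m.+2 - 2) (fun t => (STN (@pc_adj m.+2 t))%:R).
  by [].
rewrite subn2 /=.
by apply/esym/expect_cons_const => c t; rewrite STN_pc_adj ?size_tuple.
Qed.

Theorem theorem4 (R : realFieldType) (p1 p2 : R) (n : nat) :
  0 <= p1 -> 0 <= p2 -> p1 + p2 <= 1 -> (1 <= n)%N ->
  E_STN_RPC p1 p2 n =
    441 / (11 + 4 * p1 + p2) ^+ 2 * (12 + 4 * p1 + p2) ^+ n
    + (144 * p1 + 36 * p2 - 45) / (11 + 4 * p1 + p2) * n%:R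
    - 441 / (11 + 4 * p1 + p2) ^+ 2.
Proof.
move=> p1_ge0 p2_ge0 _; case: n => // n _.
have a_neq0 : 11 + 4 * p1 + p2 != 0 by rewrite lt0r_neq0 //; lra.
by rewrite E_STN_RPC_expect expect_stn_chain.
Qed.
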